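(* Let $\phi$ be the Fox function. (1) For every odd $l\ge 1$ and every integer $k>l/2$, $\phi(l,2k)=0$. (2) For every even $l\ge 0$ and every integer $k\ge l/2$, $\phi(l,2k)=\phi(l,2k+1)$. (3) For every even $l\ge 0$ and every integer $k\ge l/2$, $\phi(l+1,2k+1)=-\phi(l,2k+1)$.
   Context: For integers $0\le l\le k$, the Fox function is $\phi(l,k)=\sum_{\mathbf a}(-1)^{w(\mathbf a)+(l-1)}$, where the sum runs over all $l$-element subsets $\mathbf a\subseteq\{1,\dots,k\}$, $\mathbf b=\{1,\dots,k\}\setminus\mathbf a$, and $w(\mathbf a)$ is the number of pairs $(i,j)$ with $i\in\mathbf a$, $j\in\mathbf b$ and $j<i$. *)

From mathcomp Require Import all_boot all_order all_algebra.
Set Implicit Arguments. Unset Strict Implicit. Unset Printing Implicit Defensive.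
Import GRing.Theory Num.Theory.
Local Open Scope ring_scope.

(* The ground set {1,...,k} is represented by 'I_k, element i standing for i+1;
   this shift preserves the order used in w. *)

Definition fox_w (k : nat) (A : {set 'I_k}) : nat :=
  #|[set p : 'I_k * 'I_k | [&& p.1 \in A, p.2 \notin A & (p.2 < p.1)%N]]|.

Definition fox_phi (l k : nat) : int :=
  \sum_(A : {set 'I_k} | #|A| == l) (-1 : int) ^ ((fox_w A)%:Z + (l%:Z - 1)).

(* Write phi(l,k) = -(-1)^l S(l,k), where S(l,k) is the sum of (-1)^w(a) over
   the l-subsets a of {1..k}, i.e. the Gaussian binomial [k choose l]_q at
   q = -1.  Splitting the subsets according to whether they contain the least
   element gives the q-Pascal rule S(l,k+1) = (-1)^l S(l,k) + S(l-1,k), hence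
   S(l,k) = 0 when l is odd and k even, and S(l,k) = C(floor(k/2), floor(l/2))
   otherwise. *)

From mathcomp Require Import all_boot all_order all_algebra.
Set Implicit Arguments. Unset Strict Implicit. Unset Printing Implicit Defensive.
Import GRing.Theory Num.Theory.
Local Open Scope ring_scope.

Definition inversions n (A : {set 'I_n}) : nat :=
  (\sum_(i < n) \sum_(j < n) [&& i \in A, j \notin A & (j < i)%N])%N.

Lemma fox_w_inversions n (A : {set 'I_n}) : fox_w A = inversions A.
Proof.
rewrite /fox_w /inversions pair_big /= -sum1_card big_mkcond /=.
by apply: eq_bigr => p _; rewrite inE; case: ifP.
Qed.

Definition shift_set n (B : {set 'I_n}) : {set 'I_n.+1} := lift ord0 @: B.

Section ShiftSet.

Variable n : nat.
Implicit Types (A : {set 'I_n.+1}) (B : {set 'I_n}).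

Lemma mem_shift_set B i : (lift ord0 i \in shift_set B) = (i \in B).
Proof. exact/mem_imset/lift_inj. Qed.

Lemma ord0_shift_set B : (ord0 \in shift_set B) = false.
Proof. by apply/imsetP => -[i _ /eqP]; rewrite (negbTE (neq_lift _ _)). Qed.

Lemma mem_setU1_shift_set B i :
  (lift ord0 i \in ord0 |: shift_set B) = (i \in B).
Proof. by rewrite in_setU1 mem_shift_set eq_sym (negbTE (neq_lift _ _)). Qed.

Lemma card_shift_set B : #|shift_set B| = #|B|.
Proof. exact/card_imset/lift_inj. Qed.

Lemma preim_shift_set B : lift ord0 @^-1: shift_set B = B.
Proof. by apply/setP => i; rewrite inE mem_shift_set. Qed.

Lemma preim_setU1_shift_set B : lift ord0 @^-1: (ord0 |: shift_set B) = B.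
Proof. by apply/setP => i; rewrite inE mem_setU1_shift_set. Qed.

Lemma shift_set_preim A : ord0 \notin A -> shift_set (lift ord0 @^-1: A) = A.
Proof.
move=> A0; apply/setP => x; case: (unliftP ord0 x) => [j|] ->.
  by rewrite mem_shift_set inE.
by rewrite ord0_shift_set (negbTE A0).
Qed.

Lemma setU1_shift_set_preim A :
  ord0 \in A -> ord0 |: shift_set (lift ord0 @^-1: A) = A.
Proof.
move=> A0; apply/setP => x; case: (unliftP ord0 x) => [j|] ->.
  by rewrite mem_setU1_shift_set inE.
by rewrite setU11 A0.
Qed.

Lemma big_set_ord0_split (F : {set 'I_n.+1} -> int) :
  \sum_A F A = \sum_B F (shift_set B) + \sum_B F (ord0 |: shift_set B).
Proof.
rewrite (bigID (fun A => ord0 \in A)) /= addrC; congr (_ + _).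
  rewrite (reindex_onto (@shift_set n) (fun A => lift ord0 @^-1: A)) /=.
    by apply: eq_bigl => B; rewrite ord0_shift_set preim_shift_set eqxx.
  exact: shift_set_preim.
rewrite (reindex_onto (fun B => ord0 |: shift_set B)
                      (fun A => lift ord0 @^-1: A)) /=.
  by apply: eq_bigl => B; rewrite setU11 preim_setU1_shift_set eqxx.
exact: setU1_shift_set_preim.
Qed.

(* The new least element 0 is an inversion partner of every element of B
   when it lies outside the set, and of none when it lies inside. *)
Lemma inversions_shift_set B :
  inversions (shift_set B) = (inversions B + #|B|)%N.
Proof.
rewrite /inversions big_ord_recl /= big1 => [|j _]; last first.
  by rewrite ord0_shift_set.
rewrite add0n -sum1_card [X in (_ + X)%N]big_mkcond -big_split /=.
apply: eq_bigr => i _.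
rewrite big_ord_recl /= mem_shift_set ord0_shift_set /bump /= andbT addnC.
by congr (_ + _)%N; apply: eq_bigr => j _; rewrite !mem_shift_set.
Qed.

Lemma inversions_setU1_shift_set B :
  inversions (ord0 |: shift_set B) = inversions B.
Proof.
rewrite /inversions big_ord_recl /= big1 => [|j _]; last by rewrite ltn0 !andbF.
rewrite add0n; apply: eq_bigr => i _.
rewrite big_ord_recl /= mem_setU1_shift_set setU11 /= andbF add0n.
by apply: eq_bigr => j _; rewrite !mem_setU1_shift_set.
Qed.

End ShiftSet.

Definition signed_subsets (m n : nat) : int :=
  \sum_(A : {set 'I_n} | #|A| == m) (-1) ^+ inversions A.

Lemma signed_subsets_m0 m : signed_subsets m 0 = (m == 0%N)%:R.
Proof.
have set_I0 (A : {set 'I_0}) : A = set0 by apply/setP => -[].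
rewrite /signed_subsets; case: m => [|m].
  rewrite (big_pred1 set0) => [|A /=]; last by rewrite (set_I0 A) cards0 !eqxx.
  by rewrite /inversions big_ord0.
by rewrite big_pred0 // => A; rewrite (set_I0 A) cards0.
Qed.

Lemma signed_subsets_mS m n : signed_subsets m n.+1 =
  (-1) ^+ m * signed_subsets m n + (if m is m'.+1 then signed_subsets m' n else 0).
Proof.
rewrite /signed_subsets big_mkcond big_set_ord0_split /= mulr_sumr; congr (_ + _).
  rewrite [RHS]big_mkcond; apply: eq_bigr => B _.
  rewrite card_shift_set inversions_shift_set.
  by case: eqP => // ->; rewrite exprD mulrC.
case: m => [|m]; first by rewrite big1 // => B _; rewrite cardsU1 ord0_shift_set.
rewrite [RHS]big_mkcond; apply: eq_bigr => B _.
by rewrite cardsU1 ord0_shift_set card_shift_set inversions_setU1_shift_set eqSS.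
Qed.

Lemma signed_subsetsE m n : signed_subsets m n =
  if odd m && ~~ odd n then 0 else ('C(n./2, m./2))%:R.
Proof.
elim: n m => [|n IHn] [|m]; rewrite ?signed_subsets_m0 ?signed_subsets_mS //=.
- by case: m => [|m] //=; case: ifP.
- by rewrite IHn /= !bin0 mul1r addr0.
rewrite !IHn /= exprS -signr_odd !uphalf_half.
case: (odd n); case: (odd m) => /=; rewrite ?add0n ?add1n.
all: rewrite ?expr0 ?expr1 ?mulN1r ?mul1r ?mulr0 ?oppr0 ?add0r ?addr0 ?addNr //.
by rewrite binS natrD.
Qed.

Lemma fox_phiE l k : fox_phi l k = - (-1) ^+ l * signed_subsets l k.
Proof.
rewrite /fox_phi /signed_subsets mulr_sumr; apply: eq_bigr => A _.
rewrite fox_w_inversions !exprzDr ?unitrN1 // -!exprnP.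
by rewrite (_ : (-1) ^ (-1) = -1 :> int) // mulrN1 mulrC mulNr.
Qed.

Theorem proposition2p3 :
  (forall l k : nat, odd l -> (l < 2 * k)%N -> fox_phi l (2 * k) = 0) /\
  (forall l k : nat, ~~ odd l -> (l <= 2 * k)%N ->
     fox_phi l (2 * k) = fox_phi l (2 * k).+1) /\
  (forall l k : nat, ~~ odd l -> (l <= 2 * k)%N ->
     fox_phi l.+1 (2 * k).+1 = - fox_phi l (2 * k).+1).
Proof.
have odd_2k k : odd (2 * k) = false by rewrite mul2n odd_double.
have half_2k k : (2 * k)./2 = k by rewrite mul2n doubleK.
have uphalf_2k k : uphalf (2 * k) = k by rewrite mul2n uphalf_double.
split; [|split] => l k l_parity _; rewrite !fox_phiE !signed_subsetsE /=.
- by rewrite l_parity odd_2k mulr0.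
- by rewrite (negbTE l_parity) half_2k uphalf_2k.
rewrite (negbTE l_parity) /= uphalf_2k uphalf_half (negbTE l_parity).
by rewrite odd_2k /= add0n exprS mulN1r mulNr.
Qed.
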